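(* Let $0<\mu\le L$, $G>0$, $\rho>0$, $n\ge1$, $T\ge1$, and let $\eta>0$ satisfy $\eta\le\frac{2}{\mu+L}-\frac{\mu+L}{2\mu L(\mu/(\rho L^2)+1)}$. Then $$\frac{2G^2(\mu+L)}{n\mu L(1+\mu\rho)}\left\{1-\left[1-(1+\mu\rho)\frac{\eta\mu L}{\mu+L}\right]^T\right\}\le\frac{2G^2(\mu+L)}{n\mu L}\left\{1-\left[1-\frac{\eta\mu L}{\mu+L}\right]^T\right\};$$ that is, for per-example losses that are $\mu$-strongly convex, $L$-smooth and $G$-Lipschitz, run with such a constant learning rate for $T$ steps, the uniform-stability generalization bound of SAM (left) is at most that of SGD (right).
   Context: The left side is the generalization-error bound for SAM (update $\boldsymbol{w}_{t+1}=\boldsymbol{w}_t-\eta\nabla f(\boldsymbol{w}_t+\rho\nabla f(\boldsymbol{w}_t,z),z)$ with a uniformly sampled example $z$ from an $n$-example training set), and the right side is the corresponding bound for SGD with the same learning rate. *)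

From mathcomp Require Import all_boot all_order all_algebra.
Set Implicit Arguments. Unset Strict Implicit. Unset Printing Implicit Defensive.
Import Order.TTheory GRing.Theory Num.Theory.
Local Open Scope ring_scope.

Definition sam_bound (R : realFieldType) (G mu L rho eta : R) (n T : nat) : R :=
  (2 * G ^+ 2 * (mu + L)) / (n%:R * mu * L * (1 + mu * rho)) *
  (1 - (1 - (1 + mu * rho) * (eta * mu * L / (mu + L))) ^+ T).

Definition sgd_bound (R : realFieldType) (G mu L eta : R) (n T : nat) : R :=
  (2 * G ^+ 2 * (mu + L)) / (n%:R * mu * L) *
  (1 - (1 - eta * mu * L / (mu + L)) ^+ T).

From mathcomp Require Import all_boot all_order all_algebra.
From mathcomp Require Import ring lra.
Import Order.TTheory GRing.Theory Num.Theory.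
Local Open Scope ring_scope.

(* With a := eta mu L / (mu + L) and c := 1 + mu rho, the SAM bound carries
   the factor (1 - (1 - c a)^T) / c and the SGD bound the factor 1 - (1 - a)^T.
   Expanding 1 - y^T = (1 - y) (1 + y + ... + y^(T-1)) turns both into a times a
   partial geometric sum, with ratios 1 - c a <= 1 - a, so the comparison holds
   termwise as soon as c a <= 1.  The step-size condition gives this: it forces
   eta <= (mu + L) / (2 L (mu + rho L^2)), which makes c a <= c mu / (2 (mu + rho L^2)) <= 1. *)

Lemma subr1X (R : nzRingType) (x : R) (n : nat) :
  1 - x ^+ n = (1 - x) * \sum_(i < n) x ^+ i.
Proof. by rewrite -opprB subrX1 -mulNr opprB. Qed.

Lemma geometric_gap_div_le (R : realFieldType) (a c : R) (T : nat) :
  0 <= a -> 1 <= c -> c * a <= 1 ->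
  (1 - (1 - c * a) ^+ T) / c <= 1 - (1 - a) ^+ T.
Proof.
move=> a_ge0 c_ge1 ca_le1.
have c_neq0 : c != 0 by rewrite gt_eqF // (lt_le_trans ltr01).
rewrite !subr1X !subKr -!mulrA mulrCA; set S := \sum_(i < T) (1 - c * a) ^+ i.
rewrite [c * (S / c)]mulrC divfK //.
apply: ler_wpM2l => //; apply: ler_sum => i _.
by apply: lerXn2r; rewrite ?nnegrE; nra.
Qed.

Lemma sam_step_threshold_le (R : realFieldType) (mu L rho : R) :
  0 < mu -> mu <= L -> 0 < rho ->
  2 / (mu + L) - (mu + L) / (2 * mu * L * (mu / (rho * L ^+ 2) + 1))
    <= (mu + L) / (2 * L * (mu + rho * L ^+ 2)).
Proof.
move=> mu_gt0 mu_le_L rho_gt0.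
have L_gt0 : 0 < L := lt_le_trans mu_gt0 mu_le_L.
have q_gt0 : 0 < mu + rho * L ^+ 2 by rewrite addr_gt0 // mulr_gt0 // exprn_gt0.
have -> : 2 / (mu + L) - (mu + L) / (2 * mu * L * (mu / (rho * L ^+ 2) + 1))
    = (mu + L) / (2 * L * (mu + rho * L ^+ 2)) - (L - mu) ^+ 2 / (2 * mu * L * (mu + L)).
  by field; rewrite !lt0r_neq0 //; lra.
by rewrite gerBl divr_ge0 ?sqr_ge0 // ltW // !mulr_gt0 //; lra.
Qed.

Lemma sam_step_contraction (R : realFieldType) (mu L rho eta : R) :
  0 < mu -> mu <= L -> 0 < rho ->
  eta <= (mu + L) / (2 * L * (mu + rho * L ^+ 2)) ->
  (1 + mu * rho) * (eta * mu * L / (mu + L)) <= 1.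
Proof.
move=> mu_gt0 mu_le_L rho_gt0 eta_le.
have L_gt0 : 0 < L := lt_le_trans mu_gt0 mu_le_L.
have q_gt0 : 0 < mu + rho * L ^+ 2 by rewrite addr_gt0 // mulr_gt0 // exprn_gt0.
set q := mu + rho * L ^+ 2.
have a_le : eta * mu * L / (mu + L) <= mu / (2 * q).
  apply: (@le_trans _ _ ((mu + L) / (2 * L * q) * mu * L / (mu + L))).
    by rewrite !ler_wpM2r ?invr_ge0 //; lra.
  by rewrite le_eqVlt; apply/orP; left; apply/eqP; field; rewrite !lt0r_neq0 //; lra.
apply: (le_trans (ler_wpM2l _ a_le)).
  by rewrite addr_ge0 // ltW // mulr_gt0.
rewrite mulrA ler_pdivrMr ?mulr_gt0 // mul1r /q.
have : rho * (mu * mu) <= rho * L ^+ 2.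
  by rewrite expr2 ler_pM2l //; apply: ler_pM; lra.
lra.
Qed.

Lemma sam_boundE (R : realFieldType) (G mu L rho eta : R) (n T : nat) :
  sam_bound G mu L rho eta n T =
  (2 * G ^+ 2 * (mu + L)) / (n%:R * mu * L) *
  ((1 - (1 - (1 + mu * rho) * (eta * mu * L / (mu + L))) ^+ T) / (1 + mu * rho)).
Proof. by rewrite /sam_bound invfM; ring. Qed.

Theorem corollary6 (R : realFieldType) (mu L G rho eta : R) (n T : nat) :
  0 < mu -> mu <= L -> 0 < G -> 0 < rho -> (1 <= n)%N -> (1 <= T)%N ->
  0 < eta ->
  eta <= 2 / (mu + L) - (mu + L) / (2 * mu * L * (mu / (rho * L ^+ 2) + 1)) ->
  sam_bound G mu L rho eta n T <= sgd_bound G mu L eta n T.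
Proof.
(* The comparison holds for every G, n and T. *)
move=> mu_gt0 mu_le_L _ rho_gt0 _ _ eta_gt0 eta_le.
have L_gt0 : 0 < L := lt_le_trans mu_gt0 mu_le_L.
rewrite sam_boundE /sgd_bound; apply: ler_wpM2l.
  by rewrite divr_ge0 ?(sqr_ge0, mulr_ge0, ler0n) //; lra.
apply: geometric_gap_div_le.
- by rewrite divr_ge0 ?mulr_ge0 //; lra.
- by rewrite lerDl mulr_ge0 //; lra.
- apply: sam_step_contraction (le_trans eta_le _) => //.
  exact: sam_step_threshold_le.
Qed.
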